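(* Let $m,n$ be nonzero integers with $|m|<|n|$ such that $m$ does not divide $n$. Let $u_1,u_2$ be vertices of type $a$ of $\Lambda_{m,n}$ with $u_1<u_2$ or $u_2<u_1$. Then $u_1$ and $u_2$ correspond to adjacent vertices of $T$ if and only if there does not exist any vertex $u_3\in\Lambda_{m,n}^{(0)}\setminus\{u_1,u_2\}$ such that $\mathrm{lk}_\Lambda(u_1)\cap \mathrm{lk}_\Lambda(u_2)\subseteq \mathrm{lk}_\Lambda(u_3)$.
   Context: $\mathrm{BS}(m,n)=\langle a,t\mid ta^mt^{-1}=a^n\rangle$; $\Upsilon_{m,n}$ is its Cayley graph for $\{a,t\}$ (edges $g\to gs$ oriented, labeled $s$); $a$-lines and $t$-lines are the subgraphs spanned by left cosets of $\langle a\rangle$ and $\langle t\rangle$. $\Lambda_{m,n}$ has one vertex per $a$-line or $t$-line (of type $a$ or $t$), adjacent when the lines intersect; $\mathrm{lk}_\Lambda(u)$ is the set of neighbours of $u$. $T$ is the Bass–Serre tree whose vertices are the $a$-lines (= type-$a$ vertices), with one edge oriented from $\ell$ to $\ell'$ for each pair of $a$-lines such that $gt\in\ell'$ for some $g\in\ell$. Partial order: $v_1\le v_2$ if every edge of the geodesic from $v_1$ to $v_2$ in $T$ is oriented toward $v_2$; $<$ denotes strict order. *)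

(* Baumslag-Solitar group BS(m,n) = <a,t | t a^m t^-1 = a^n>,
   modelled by words in the generators modulo the congruence generated by
   free cancellation and the defining relator. *)
From mathcomp Require Import all_boot all_order all_algebra.
Set Implicit Arguments. Unset Strict Implicit. Unset Printing Implicit Defensive.
Import Order.TTheory GRing.Theory Num.Theory.

Inductive letter := LA | LAi | LT | LTi.

Definition linv (x : letter) : letter :=
  match x with LA => LAi | LAi => LA | LT => LTi | LTi => LT end.

Definition word := seq letter.

Definition apow (k : int) : word :=
  match k with Posz j => nseq j LA | Negz j => nseq j.+1 LAi end.

Definition tpow (k : int) : word :=
  match k with Posz j => nseq j LT | Negz j => nseq j.+1 LTi end.

Inductive bs_eq (m n : int) : word -> word -> Prop :=
| bs_refl w : bs_eq m n w w
| bs_sym u v : bs_eq m n u v -> bs_eq m n v u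
| bs_trans u v w : bs_eq m n u v -> bs_eq m n v w -> bs_eq m n u w
| bs_cancel u v x : bs_eq m n (u ++ [:: x; linv x] ++ v) (u ++ v)
| bs_rel u v : bs_eq m n (u ++ (LT :: apow m ++ [:: LTi]) ++ v) (u ++ apow n ++ v).

Definition in_aline (m n : int) (g h : word) : Prop :=
  exists k : int, bs_eq m n h (g ++ apow k).
Definition in_tline (m n : int) (g h : word) : Prop :=
  exists k : int, bs_eq m n h (g ++ tpow k).

(* vertices of Lambda_{m,n}: an a-line or a t-line, given by a representative *)
Inductive lvert := VA of word | VT of word.

Definition line (m n : int) (u : lvert) : word -> Prop :=
  match u with VA g => in_aline m n g | VT g => in_tline m n g end.

Definition same_vert (m n : int) (u v : lvert) : Prop :=
  match u, v with
  | VA g, VA h => in_aline m n g h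
  | VT g, VT h => in_tline m n g h
  | _, _ => False
  end.

Definition ladj (m n : int) (u v : lvert) : Prop :=
  ~ same_vert m n u v /\ exists x, line m n u x /\ line m n v x.

(* Bass-Serre tree T: vertices are a-lines (representatives g),
   oriented edge l -> l' iff some g in l has g t in l'. *)
Definition tedge (m n : int) (l l' : word) : Prop :=
  exists g, in_aline m n l g /\ in_aline m n l' (g ++ [:: LT]).

Definition tadj (m n : int) (l l' : word) : Prop :=
  tedge m n l l' \/ tedge m n l' l.

Fixpoint rpath (e : word -> word -> Prop) (x : word) (p : seq word) : Prop :=
  match p with [::] => True | y :: p' => e x y /\ rpath e y p' end.

(* p is a geodesic of T from v1 to v2 (x :: p lists its vertices) *)
Definition geodesic (m n : int) (v1 v2 : word) (p : seq word) : Prop :=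
  rpath (tadj m n) v1 p /\ in_aline m n v2 (last v1 p) /\
  forall q, rpath (tadj m n) v1 q -> in_aline m n v2 (last v1 q) ->
            size p <= size q.

Definition tle (m n : int) (v1 v2 : word) : Prop :=
  exists p, geodesic m n v1 v2 p /\ rpath (tedge m n) v1 p.

Definition tlt (m n : int) (v1 v2 : word) : Prop :=
  tle m n v1 v2 /\ ~ in_aline m n v1 v2.

(* Distances in the Bass-Serre tree T are bounded below through normal forms.
   The normal form of a coset g<a> is a reduced word a^r1 t^e1 ... a^rk t^ek;
   the group acts on normal forms compatibly with left multiplication, so the
   normal form is an invariant of a-lines mapping the edges of T to edges of the
   prefix tree of normal forms, and prefix distances are lower bounds in T.

   If g1<a> -> g2<a> is an edge of T realised by g and g t, the t-lines through g
   and g a^n are common neighbours of both vertices. Another vertex adjacent to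
   both must be an a-line meeting the two t-lines; translated by g^-1 this says
   t^i<a> = a^n t^j<a>, and comparing normal forms forces i = 0 or 1 unless m | n
   or n | m, i.e. the vertex is g1<a> or g2<a>.

   If g1<a> < g2<a> are not adjacent, the second vertex y<a> of the geodesic
   dominates the common link. A common neighbour is a t-line h<t> meeting g1<a>
   in h t^i and g2<a> in h t^j, so the geodesic is at most |j - i| long. Its
   first edge leaves from h t^i a^c; if n does not divide c, normal forms put
   y<a> at distance |j - i| + 1 from g2<a>, which is too far. Hence n | c, so
   y<a> contains h t^(i+1) and meets h<t>. *)

From mathcomp Require Import all_boot all_order all_algebra zify.
From Stdlib Require Import Morphisms Classical_Prop.
Import Order.TTheory GRing.Theory Num.Theory.
Set Implicit Arguments. Unset Strict Implicit. Unset Printing Implicit Defensive.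

Local Open Scope ring_scope.

(** * Words modulo the relations of BS(m,n) *)

Definition gpow (x : letter) (k : int) : word :=
  match k with Posz j => nseq j x | Negz j => nseq j.+1 (linv x) end.

Lemma apowE k : apow k = gpow LA k. Proof. by case: k. Qed.
Lemma tpowE k : tpow k = gpow LT k. Proof. by case: k. Qed.

Definition winv (w : word) : word := rev (map linv w).

Lemma linvK : involutive linv. Proof. by case. Qed.

#[local] Hint Resolve bs_refl : core.

Section BaumslagSolitar.
Variables m n : int.
Local Notation "u ≡ v" := (bs_eq m n u v) (at level 70, no associativity).

Lemma bs_eq_catl p u v : u ≡ v -> p ++ u ≡ p ++ v.
Proof.
elim=> {u v} [w|u v _ IH|u v w _ IH1 _ IH2|u v x|u v].
- exact: bs_refl.
- exact: bs_sym.
- exact: bs_trans IH1 IH2.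
- by have := bs_cancel m n (p ++ u) v x; rewrite -!catA.
- by have := bs_rel m n (p ++ u) v; rewrite -!catA.
Qed.

Lemma bs_eq_catr s u v : u ≡ v -> u ++ s ≡ v ++ s.
Proof.
elim=> {u v} [w|u v _ IH|u v w _ IH1 _ IH2|u v x|u v].
- exact: bs_refl.
- exact: bs_sym.
- exact: bs_trans IH1 IH2.
- by have := bs_cancel m n u (v ++ s) x; rewrite -!catA.
- by have := bs_rel m n u (v ++ s); rewrite -!catA.
Qed.

#[local] Instance bs_eq_Equivalence : Equivalence (bs_eq m n).
Proof. split; [exact: bs_refl|exact: bs_sym|exact: bs_trans]. Qed.

#[local] Instance cat_bs_eq_Proper :
  Proper (bs_eq m n ==> bs_eq m n ==> bs_eq m n) (@cat letter).
Proof.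
by move=> u u' hu v v' hv; apply: bs_trans (bs_eq_catr _ hu) (bs_eq_catl _ hv).
Qed.

#[local] Instance cons_bs_eq_Proper x :
  Proper (bs_eq m n ==> bs_eq m n) (cons x).
Proof. by move=> u v; apply: bs_eq_catl [:: x] u v. Qed.

Lemma bs_eq_linvK x s : x :: linv x :: s ≡ s.
Proof. exact: bs_cancel m n [::] s x. Qed.

Lemma bs_eq_linvVK x s : linv x :: x :: s ≡ s.
Proof. by have := bs_eq_linvK (linv x) s; rewrite linvK. Qed.

Lemma winvK u s : winv u ++ u ++ s ≡ s.
Proof.
elim: u s => [|x u IH] s //=.
by rewrite /winv map_cons rev_cons -cats1 -catA /= bs_eq_linvVK IH.
Qed.

Lemma gpowS x k : x :: gpow x k ≡ gpow x (k + 1).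
Proof.
case: k => [j|[|j]]; first by rewrite -PoszD addn1.
- exact: bs_eq_linvK x [::].
- by rewrite (_ : Negz j.+1 + 1 = Negz j); [exact: bs_eq_linvK | lia].
Qed.

Lemma gpowSV x k : linv x :: gpow x k ≡ gpow x (k - 1).
Proof. by rewrite -{1}(subrK 1 k) -gpowS bs_eq_linvVK. Qed.

Lemma gpowD x k l : gpow x k ++ gpow x l ≡ gpow x (k + l).
Proof.
elim/int_rect: k => [|j IH|j IH]; first by rewrite add0r.
- by rewrite -addn1 PoszD addrAC -!gpowS /= IH.
- by rewrite -addn1 PoszD opprD addrAC -!gpowSV /= IH.
Qed.

Lemma apowD k l : apow k ++ apow l ≡ apow (k + l).
Proof. by rewrite !apowE gpowD. Qed.

Lemma tpowD k l : tpow k ++ tpow l ≡ tpow (k + l).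
Proof. by rewrite !tpowE gpowD. Qed.

Lemma tconj_apow q : LT :: apow (q * m) ++ [:: LTi] ≡ apow (q * n).
Proof.
have tconjD k l : (LT :: apow k ++ [:: LTi]) ++ LT :: apow l ++ [:: LTi] ≡
                  LT :: apow (k + l) ++ [:: LTi].
  by rewrite /= -catA /= bs_eq_linvK catA apowD.
have tconj_m : LT :: apow m ++ [:: LTi] ≡ apow n.
  by have := bs_rel m n [::] [::]; rewrite !cats0.
have tconj_Nm : LT :: apow (- m) ++ [:: LTi] ≡ apow (- n).
  have e : LT :: apow (- m) ++ [:: LTi] ≡
           (LT :: apow (- m) ++ [:: LTi]) ++ apow n ++ apow (- n).
    by rewrite apowD subrr cats0.
  rewrite e catA -tconj_m tconjD addNr.
  exact: bs_eq_linvK LT _.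
elim/int_rect: q => [|j IH|j IH]; first by rewrite !mul0r; exact: bs_eq_linvK LT [::].
- by rewrite -addn1 PoszD !mulrDl !mul1r -tconjD IH tconj_m apowD.
- by rewrite -addn1 PoszD opprD !mulrDl !mulN1r -tconjD IH tconj_Nm apowD.
Qed.

Lemma apow_mul_t q : apow (q * n) ++ [:: LT] ≡ LT :: apow (q * m).
Proof.
by rewrite -tconj_apow /= -catA /= (bs_eq_linvVK LT) cats0.
Qed.

Lemma apow_n_t : apow n ++ [:: LT] ≡ LT :: apow m.
Proof. by have := apow_mul_t 1; rewrite !mul1r. Qed.

(** * Lines, the tree T and the graph Lambda *)

Definition in_gline x g h := exists k, h ≡ g ++ gpow x k.

#[local] Instance in_gline_Equivalence x : Equivalence (in_gline x).
Proof.
split.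
- by move=> g; exists 0; rewrite cats0.
- move=> g h [k e]; exists (- k).
  by rewrite e -catA gpowD subrr cats0.
- move=> g h l [k e] [k' e']; exists (k + k').
  by rewrite e' e -catA gpowD.
Qed.

#[local] Instance in_gline_Proper x :
  Proper (bs_eq m n ==> bs_eq m n ==> iff) (in_gline x).
Proof.
move=> g g' eg h h' eh.
by split=> -[k e]; exists k; [rewrite -eh -eg | rewrite eh eg].
Qed.

Lemma in_gline_catl x p g h : in_gline x (p ++ g) (p ++ h) <-> in_gline x g h.
Proof.
split=> -[k e]; exists k; last by rewrite e catA.
by rewrite -[h](winvK p) e -!catA winvK.
Qed.

#[local] Instance in_aline_Equivalence : Equivalence (in_aline m n) :=
  in_gline_Equivalence LA.
#[local] Instance in_aline_Proper :
  Proper (bs_eq m n ==> bs_eq m n ==> iff) (in_aline m n) := in_gline_Proper LA.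
#[local] Instance in_tline_Equivalence : Equivalence (in_tline m n) :=
  in_gline_Equivalence LT.

#[local] Hint Extern 0 (in_aline _ _ _ _) => reflexivity : core.

Lemma in_aline_catl p g h : in_aline m n (p ++ g) (p ++ h) <-> in_aline m n g h.
Proof. exact: in_gline_catl LA p g h. Qed.

Lemma in_aline_apow g k : in_aline m n g (g ++ apow k).
Proof. by exists k. Qed.

Lemma in_tline_tpow g k : in_tline m n g (g ++ tpow k).
Proof. by exists k. Qed.

#[local] Instance tedge_Proper :
  Proper (in_aline m n ==> in_aline m n ==> iff) (tedge m n).
Proof.
move=> l1 l1' e1 l2 l2' e2.
by split=> -[g [h1 h2]]; exists g; rewrite ?e1 ?e2 in h1 h2 *.
Qed.

#[local] Instance tadj_Proper :
  Proper (in_aline m n ==> in_aline m n ==> iff) (tadj m n).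
Proof. by move=> l1 l1' e1 l2 l2' e2; rewrite /tadj e1 e2. Qed.

Lemma tadj_sym l l' : tadj m n l l' -> tadj m n l' l.
Proof. by case=> h; [right|left]. Qed.

Lemma tadj_tpowS h i : tadj m n (h ++ tpow i) (h ++ tpow (i + 1)).
Proof. by left; exists (h ++ tpow i); split; rewrite // -catA (tpowD i 1). Qed.

Lemma tline_path h d i u : in_aline m n u (h ++ tpow i) ->
  exists p, [/\ rpath (tadj m n) u p, in_aline m n (last u p) (h ++ tpow (i + d))
              & size p = `|d|%N].
Proof.
elim/int_rect: d i u => [|j IH|j IH] i u hu; first by exists [::]; rewrite addr0.
- have [p [hp hl hs]] := IH (i + 1) _ (reflexivity _).
  exists ((h ++ tpow (i + 1)) :: p); split=> /=; last by rewrite hs.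
    by split=> //; rewrite hu; apply: tadj_tpowS.
  by rewrite hl (_ : i + 1 + j = i + j.+1) //; lia.
- have [p [hp hl hs]] := IH (i - 1) _ (reflexivity _).
  exists ((h ++ tpow (i - 1)) :: p); split=> /=; last by rewrite hs abszN.
    split=> //; rewrite hu; apply: tadj_sym.
    by rewrite -[X in tadj _ _ _ (_ ++ tpow X)](subrK 1 i); apply: tadj_tpowS.
  by rewrite hl (_ : i - 1 + - j%:Z = i - j.+1%:Z) //; lia.
Qed.

Lemma geodesic_size_tline g1 g2 p h i j : geodesic m n g1 g2 p ->
  in_aline m n g1 (h ++ tpow i) -> in_aline m n g2 (h ++ tpow j) ->
  (size p <= `|j - i|)%N.
Proof.
case=> _ [_ min] e1 e2; have [q [hq hl <-]] := tline_path (j - i) e1.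
by apply: min hq _; rewrite e2 hl addrC subrK.
Qed.

Lemma ladj_VA_VA g h : ~ ladj m n (VA g) (VA h).
Proof. by case=> /= + [x [hg hh]]; apply; rewrite hg hh; reflexivity. Qed.

Lemma ladj_VT_VT g h : ~ ladj m n (VT g) (VT h).
Proof. by case=> /= + [x [hg hh]]; apply; rewrite hg hh; reflexivity. Qed.

Lemma ladj_VA_VT g h :
  ladj m n (VA g) (VT h) <-> exists k, in_aline m n g (h ++ tpow k).
Proof.
split=> [[_ [x [hg [k e]]]]|[k hk]]; first by exists k; rewrite -e.
by split=> //; exists (h ++ tpow k); split=> //; apply: in_tline_tpow.
Qed.

Definition link_dominator (g1 g2 : word) (u : lvert) : Prop :=
  ~ same_vert m n (VA g1) u /\ ~ same_vert m n (VA g2) u /\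
  forall w, ladj m n (VA g1) w -> ladj m n (VA g2) w -> ladj m n u w.

Lemma link_dominator_sym g1 g2 u : link_dominator g1 g2 u -> link_dominator g2 g1 u.
Proof. by case=> ne1 [ne2 dom]; do 2 split=> //; move=> w h2 h1; apply: dom. Qed.

(** * Normal forms of the vertices of T *)

(* [:: (b1, r1); ...; (bk, rk)] encodes the vertex a^r1 t^e1 ... a^rk t^ek <a>
   of T, where e = 1 if b and e = -1 otherwise. Since a^n t = t a^m, the
   remainder r in front of t^e is reduced modulo [tmod b] (n before t, m before
   t^-1), and [reduced] also forbids the backtracking t^e a^0 t^-e. *)
Definition nf := seq (bool * int).

Definition nf_edge (v w : nf) : Prop :=
  (exists r, w = rcons v (true, r)) \/ (exists r, v = rcons w (false, r)).

Fixpoint lcp (v w : nf) : nat :=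
  if (v, w) is (x :: v', y :: w') then (if x == y then (lcp v' w').+1 else 0%N)
  else 0%N.

Definition nf_dist (v w : nf) : nat := (size v + size w - 2 * lcp v w)%N.

Lemma lcp_leql v w : (lcp v w <= size v)%N.
Proof. by elim: v w => [|x v IH] [|y w] //=; case: eqP => // _; apply: IH. Qed.

Lemma lcp_leqr v w : (lcp v w <= size w)%N.
Proof. by elim: v w => [|x v IH] [|y w] //=; case: eqP => // _; apply: IH. Qed.

Lemma lcp_rcons v e w : (lcp v w <= lcp (rcons v e) w <= (lcp v w).+1)%N.
Proof.
elim: v w => [|x v IH] [|y w] //=; first by case: eqP.
by case: eqP => // _; apply: IH.
Qed.

Lemma lcp_refl v : lcp v v = size v.
Proof. by elim: v => //= x v ->; rewrite eqxx. Qed.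

Lemma nf_dist_edge v v' w : nf_edge v v' -> (nf_dist v w <= (nf_dist v' w).+1)%N.
Proof.
rewrite /nf_dist => -[[r ->]|[r ->]]; rewrite size_rcons.
- have := lcp_rcons v (true, r) w; have := lcp_leql v w; have := lcp_leqr v w.
  have := lcp_leqr (rcons v (true, r)) w; lia.
- have := lcp_rcons v' (false, r) w; have := lcp_leql v' w.
  have := lcp_leqr v' w; have := lcp_leqr (rcons v' (false, r)) w; lia.
Qed.

Lemma nf_dist_t_nseq r k b :
  r != 0 -> nf_dist [:: (true, r)] (nseq k (b, 0)) = k.+1.
Proof.
rewrite /nf_dist => r_neq0; case: k => [|k] //=.
by rewrite xpair_eqE (negbTE r_neq0) andbF size_nseq subn0.
Qed.

Definition tmod (b : bool) : int := if b then n else m.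

Fixpoint nf_mulA (c : int) (v : nf) : nf :=
  if v is (b, r) :: w then
    (b, modz (r + c) (tmod b)) :: nf_mulA (divz (r + c) (tmod b) * tmod (~~ b)) w
  else [::].

Definition nf_mulT (v : nf) : nf :=
  if v is (false, r) :: w then (if r == 0 then w else (true, 0) :: v)
  else (true, 0) :: v.

Definition nf_mulTV (v : nf) : nf :=
  if v is (true, r) :: w then (if r == 0 then w else (false, 0) :: v)
  else (false, 0) :: v.

Definition nf_act_letter (x : letter) : nf -> nf :=
  match x with
  | LA => nf_mulA 1 | LAi => nf_mulA (-1) | LT => nf_mulT | LTi => nf_mulTV
  end.

Definition nf_act (w : word) (v : nf) : nf := foldr nf_act_letter v w.

Fixpoint reduced (v : nf) : Prop :=
  if v is (b, r) :: w then
    [/\ 0 <= r < `|tmod b|,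
        (if w is (b', r') :: _ then b' = b \/ r' != 0 else True) & reduced w]
  else True.

Lemma nf_act_cat u w v : nf_act (u ++ w) v = nf_act u (nf_act w v).
Proof. by rewrite /nf_act foldr_cat. Qed.

Lemma nf_mulA_rcons c v e :
  exists r, nf_mulA c (rcons v e) = rcons (nf_mulA c v) (e.1, r).
Proof.
elim: v c => [|[b r] w IH] c /=; first by case: e => b r; eexists.
by have [r' ->] := IH (divz (r + c) (tmod b) * tmod (~~ b)); exists r'.
Qed.

Lemma nf_act_letter_rcons x v e :
  (exists r, nf_act_letter x (rcons v e) = rcons (nf_act_letter x v) (e.1, r)) \/
  [/\ v = [::], nf_act_letter x [:: e] = [::]
      & nf_act_letter x [::] = [:: (~~ e.1, 0)]].
Proof.
case: x => /=; try by left; apply: nf_mulA_rcons.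
all: case: v => [|[[] r] w]; case: e => [[] r0] /=; try by left; exists r0.
all: case: eqP => _; by [right | left; exists r0].
Qed.

Lemma nf_edge_act_letter x v w :
  nf_edge v w -> nf_edge (nf_act_letter x v) (nf_act_letter x w).
Proof.
case=> [[r ->]|[r ->]].
- have [[r' ->]|[-> -> ->]] := nf_act_letter_rcons x v (true, r).
    by left; exists r'.
  by right; exists 0.
- have [[r' ->]|[-> -> ->]] := nf_act_letter_rcons x w (false, r).
    by right; exists r'.
  by left; exists 0.
Qed.

Lemma nf_edge_act u v w : nf_edge v w -> nf_edge (nf_act u v) (nf_act u w).
Proof. by elim: u => [|x u IH] //= /IH; apply: nf_edge_act_letter. Qed.

Definition nf_of (g : word) : nf := nf_act g [::].

Lemma nf_of_cat u w : nf_of (u ++ w) = nf_act u (nf_of w).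
Proof. exact: nf_act_cat. Qed.

Lemma nf_of_tpow d : nf_of (tpow d) = nseq `|d|%N (0 <= d, 0).
Proof. by case: d => j; elim: j => //= j; rewrite /nf_of /= => ->; case: j. Qed.

Section NonZero.
Hypotheses (m_neq0 : m != 0) (n_neq0 : n != 0).

Lemma tmod_neq0 b : tmod b != 0. Proof. by case: b. Qed.

Lemma nf_mulA_comp c d v : nf_mulA c (nf_mulA d v) = nf_mulA (d + c) v.
Proof.
elim: v c d => [|[b r] w IH] c d //=.
rewrite IH modzDml addrA -mulrDl; congr ((_, _) :: nf_mulA (_ * _) _).
by rewrite [in RHS](divz_eq (r + d) (tmod b)) -[in RHS]addrA divzMDl ?tmod_neq0.
Qed.

Lemma nf_mulA0 v : reduced v -> nf_mulA 0 v = v.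
Proof.
elim: v => [|[b r] w IH] //= [hr _ /IH hw].
by rewrite addr0 -modz_abs modz_small // divz_small ?mul0r ?hw // abszE.
Qed.

Lemma reduced_mulA c v : reduced v -> reduced (nf_mulA c v).
Proof.
elim: v c => [|[b r] w IH] c //= [hr hw rw]; split; last exact: IH.
  by rewrite modz_ge0 ?tmod_neq0 // ltz_mod ?tmod_neq0.
case: w hw rw {IH} => [|[b' r'] w'] //= [-> | r'_neq0] [r'_range _ _]; first by left.
case: (eqVneq b' b) => [->|ne]; first by left.
right; have -> : tmod (~~ b) = tmod b' by case: b b' ne {hr r'_range} => [] [].
by rewrite addrC modzMDl -modz_abs modz_small.
Qed.

Lemma reduced_mulT v : reduced v -> reduced (nf_mulT v).
Proof.
case: v => [|[[] r] w] /=; last case: eqP => [_ [] //|/eqP r_neq0].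
all: move=> rv; split; rewrite ?normr_gt0 //; by [left | right].
Qed.

Lemma reduced_mulTV v : reduced v -> reduced (nf_mulTV v).
Proof.
case: v => [|[[] r] w] /=; [|case: eqP => [_ [] //|/eqP r_neq0]|].
all: move=> rv; split; rewrite ?normr_gt0 //; by [left | right].
Qed.

Lemma reduced_act w v : reduced v -> reduced (nf_act w v).
Proof.
elim: w => [|[] w IH] //= /IH;
  [exact: reduced_mulA|exact: reduced_mulA|exact: reduced_mulT|exact: reduced_mulTV].
Qed.

Lemma reduced_nf_of g : reduced (nf_of g).
Proof. exact: reduced_act. Qed.

Lemma nf_mulTK v : reduced v -> nf_mulT (nf_mulTV v) = v.
Proof.
case: v => [|[[] r] w] //=; case: eqP => [->|] //= [_ + _].
by case: w => [|[[] r'] w'] //= [] // /negbTE ->.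
Qed.

Lemma nf_mulTVK v : reduced v -> nf_mulTV (nf_mulT v) = v.
Proof.
case: v => [|[[] r] w] //=; case: eqP => [->|] //= [_ + _].
by case: w => [|[[] r'] w'] //= [] // /negbTE ->.
Qed.

Lemma nf_act_apow k v : reduced v -> nf_act (apow k) v = nf_mulA k v.
Proof.
move=> rv; case: k => j; elim: j => [|j IH] //=; first by rewrite nf_mulA0.
- by rewrite IH nf_mulA_comp -addn1 PoszD.
- by move: IH => /= ->; rewrite nf_mulA_comp; congr nf_mulA; lia.
Qed.

Lemma nf_act_relator v :
  reduced v -> nf_act (LT :: apow m ++ [:: LTi]) v = nf_act (apow n) v.
Proof.
move=> rv; rewrite /= nf_act_cat /= !nf_act_apow //; last exact: reduced_mulTV.
case: v rv => [|[[] r] w] /=; first by rewrite add0r modzz.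
- case: eqP => [->|_] [_ + rw] /=; last by rewrite add0r modzz divzz m_neq0 mul1r.
  rewrite add0r modzz divzz n_neq0 mul1r.
  case: w rw => [|[[] r'] w'] //= [r'_range _ _] [] // r'_neq0.
  by rewrite modzDr -modz_abs modz_small // (negbTE r'_neq0).
- by rewrite add0r modzz divzz m_neq0 mul1r.
Qed.

Lemma nf_act_cancel x v :
  reduced v -> nf_act_letter x (nf_act_letter (linv x) v) = v.
Proof.
case: x => /= rv; rewrite ?nf_mulTK ?nf_mulTVK //.
all: by rewrite nf_mulA_comp ?addrN ?addNr nf_mulA0.
Qed.

Lemma nf_act_bs_eq u w v : u ≡ w -> reduced v -> nf_act u v = nf_act w v.
Proof.
move=> e; elim: e v => {u w} [w|u w _ IH|u w w' _ IH1 _ IH2|u w x|u w] v rv //.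
- by rewrite IH.
- by rewrite IH1 // IH2.
- by rewrite !nf_act_cat /= nf_act_cancel //; apply: reduced_act.
- by rewrite !nf_act_cat nf_act_relator //; apply: reduced_act.
Qed.

Lemma nf_of_bs_eq g h : g ≡ h -> nf_of g = nf_of h.
Proof. by move=> e; apply: nf_act_bs_eq. Qed.

Lemma nf_of_aline g h : in_aline m n g h -> nf_of g = nf_of h.
Proof. by case=> k e; rewrite (nf_of_bs_eq e) nf_of_cat /nf_of nf_act_apow. Qed.

Lemma nf_of_catl_aline z g h : in_aline m n g h -> nf_of (z ++ g) = nf_of (z ++ h).
Proof. by move=> e; rewrite !nf_of_cat (nf_of_aline e). Qed.

Lemma nf_edge_of_tedge z l l' :
  tedge m n l l' -> nf_edge (nf_of (z ++ l)) (nf_of (z ++ l')).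
Proof.
case=> g [e e']; rewrite (nf_of_catl_aline z e) (nf_of_catl_aline z e') /nf_of.
by rewrite !nf_act_cat; do 2 apply: nf_edge_act; left; exists 0.
Qed.

Lemma nf_dist_path z x p : rpath (tedge m n) x p ->
  (nf_dist (nf_of (z ++ x)) (nf_of (z ++ last x p)) <= size p)%N.
Proof.
elim: p x => [|y p IH] x /=; first by rewrite /nf_dist lcp_refl; lia.
case=> exy /IH; have := nf_dist_edge (nf_of (z ++ last y p)) (nf_edge_of_tedge z exy).
lia.
Qed.

Lemma nf_of_apow_t c : nf_of (apow c ++ [:: LT]) = [:: (true, modz c n)].
Proof.
rewrite nf_of_cat /nf_of nf_act_apow /=; last by rewrite normr_gt0.
by rewrite add0r.
Qed.

Lemma geodesic_first_step_tline g1 g2 y p h i j :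
  geodesic m n g1 g2 (y :: p) -> rpath (tedge m n) g1 (y :: p) ->
  in_aline m n g1 (h ++ tpow i) -> in_aline m n g2 (h ++ tpow j) ->
  in_aline m n y (h ++ tpow (i + 1)).
Proof.
move=> geo [[g [e1g eyg]] path_y] e1 e2.
have [c ec] : in_aline m n (h ++ tpow i) g by rewrite -e1.
rewrite ec -catA in eyg.
pose z := winv (h ++ tpow i).
have nf_y : nf_of (z ++ y) = [:: (true, modz c n)].
  by rewrite (nf_of_catl_aline z eyg) (nf_of_bs_eq (winvK _ _)) nf_of_apow_t.
have nf_g2 : nf_of (z ++ last y p) = nf_of (tpow (j - i)).
  case: geo => _ [/= e_last _]; rewrite -(nf_of_catl_aline z e_last).
  rewrite (nf_of_catl_aline z e2); apply: nf_of_bs_eq.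
  have -> : tpow j ≡ tpow i ++ tpow (j - i) by rewrite tpowD addrC subrK.
  by rewrite (catA h) winvK.
have c_mod : modz c n = 0.
  apply/eqP; apply: contraTT (geodesic_size_tline geo e1 e2) => c_neq0.
  have := nf_dist_path z path_y; rewrite nf_y nf_g2 nf_of_tpow nf_dist_t_nseq //=.
  lia.
rewrite eyg (divz_eq c n) c_mod addr0 apow_mul_t -cat1s catA.
by rewrite -in_aline_apow -catA (tpowD i 1).
Qed.

Lemma tlt_link_dominator g1 g2 :
  tlt m n g1 g2 -> ~ tadj m n g1 g2 -> exists u, link_dominator g1 g2 u.
Proof.
move=> [[p [geo orient]] ne12] nadj.
case: p geo orient => [|y [|y' p]] geo orient.
- by case: ne12; case: geo => _ [/= e _]; symmetry.
- by case: nadj; case: geo => [[adj _] [/= e _]]; rewrite e.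
case: (geo) => [[adj1 [adj2 path]] [e_last min]].
exists (VA y); split; [|split].
- move=> /= e1y; have := min (y' :: p); rewrite /= e1y => /(_ (conj adj2 path) e_last).
  lia.
- by move=> /= e2y; have := min [:: y] (conj adj1 I) e2y.
case=> [w|h] /=; first by move/ladj_VA_VA.
move=> /ladj_VA_VT [i e1] /ladj_VA_VT [j e2]; apply/ladj_VA_VT; exists (i + 1).
exact: geodesic_first_step_tline geo orient e1 e2.
Qed.

Hypotheses (ndvd_mn : ~~ (m %| n)%Z) (ndvd_nm : ~~ (n %| m)%Z).

Lemma aline_tpow_apow_tpow i j :
  in_aline m n (tpow i) (apow n ++ tpow j) -> i = 0 \/ i = 1.
Proof.
move/nf_of_aline; rewrite nf_of_cat nf_act_apow; last exact: reduced_nf_of.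
rewrite !nf_of_tpow; case: i => [[|[|i]]|i]; [by left|by right| |].
all: case: j => [[|[|j]]|j] /=; rewrite ?add0r ?modzz ?divzz ?n_neq0 ?mul1r ?add0r //.
- by case=> /esym/dvdz_mod0P nm _; move: ndvd_nm; rewrite nm.
- by case=> /esym/dvdz_mod0P mn _; move: ndvd_mn; rewrite mn.
Qed.

Lemma tedge_no_link_dominator g1 g2 :
  tedge m n g1 g2 -> ~ exists u, link_dominator g1 g2 u.
Proof.
case=> g [e1 e2] [u [ne1 [ne2 dom]]].
have lk1 : ladj m n (VA g1) (VT g) by apply/ladj_VA_VT; exists 0; rewrite cats0.
have lk2 : ladj m n (VA g2) (VT g) by apply/ladj_VA_VT; exists 1.
have lk1' : ladj m n (VA g1) (VT (g ++ apow n)).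
  by apply/ladj_VA_VT; exists 0; rewrite cats0 e1; apply: in_aline_apow.
have lk2' : ladj m n (VA g2) (VT (g ++ apow n)).
  apply/ladj_VA_VT; exists 1; rewrite e2 -catA apow_n_t -(cat1s LT (apow m)) catA.
  by rewrite -in_aline_apow.
case: u ne1 ne2 dom => [y|h] /= ne1 ne2 dom; last exact: ladj_VT_VT (dom _ lk1 lk2).
have /ladj_VA_VT [i ei] := dom _ lk1 lk2.
have /ladj_VA_VT [j ej] := dom _ lk1' lk2'.
have eij : in_aline m n (tpow i) (apow n ++ tpow j).
  by rewrite -(in_aline_catl g) -ei catA.
have [i0|i1] := aline_tpow_apow_tpow eij.
- by apply: ne1; rewrite e1 ei i0 cats0.
- by apply: ne2; rewrite e2 ei i1.
Qed.

End NonZero.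

End BaumslagSolitar.

Lemma ndvdz_lt (d k : int) : k != 0 -> `|k| < `|d| -> ~~ (d %| k)%Z.
Proof.
move=> k_neq0 lt_kd; rewrite dvdzE; apply/negP => /dvdn_leq.
rewrite absz_gt0 k_neq0 => /(_ isT); move: lt_kd; rewrite -!abszE; lia.
Qed.

Theorem lemma3p8 (m n : int) (hm : m != 0) (hn : n != 0)
  (hmn : `|m| < `|n|) (hdiv : ~~ (m %| n)%Z) (g1 g2 : word) :
  tlt m n g1 g2 \/ tlt m n g2 g1 ->
  (tadj m n g1 g2 <->
   ~ (exists u3 : lvert,
        ~ same_vert m n (VA g1) u3 /\ ~ same_vert m n (VA g2) u3 /\
        forall w : lvert, ladj m n (VA g1) w -> ladj m n (VA g2) w ->
                          ladj m n u3 w)).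
Proof.
have ndvd_nm : ~~ (n %| m)%Z := ndvdz_lt hm hmn.
have no_dom := tedge_no_link_dominator hm hn hdiv ndvd_nm.
move=> hlt; split.
- case=> [e|e] [u dom]; first by apply: (no_dom _ _ e); exists u.
  by apply: (no_dom _ _ e); exists u; apply: link_dominator_sym.
- move=> nodom; apply: NNPP => nadj; apply: nodom.
  case: hlt => hlt; first exact: (tlt_link_dominator hm hn hlt nadj).
  have [u dom] := tlt_link_dominator hm hn hlt (fun e => nadj (tadj_sym e)).
  by exists u; apply: link_dominator_sym.
Qed.
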